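(* $\mathbf{TP}_n$ is closed under necessitation for $[\varnothing]$: if $\phi\in\mathbf{TP}_n$, then $[\varnothing]\phi\in\mathbf{TP}_n$.
   Context: $N$ is a finite set of players. Formulas of $\mathcal L^+$: $\phi::=1\mid p\mid\phi\to\phi\mid\neg\phi\mid[C]\phi\mid[\mathcal O]\phi$ ($p$ in a countably infinite set $\mathsf{Prop}$, $C\subseteq N$); abbreviations $0=\neg1$, $\phi\oplus\psi=\neg\phi\to\psi$, $\phi\odot\psi=\neg(\phi\to\neg\psi)$, $\phi\wedge\psi=\phi\odot(\phi\to\psi)$, $\phi\leftrightarrow\psi=(\phi\to\psi)\odot(\psi\to\phi)$. $\mathbf{TP}_n$ is the smallest set of $\mathcal L^+$-formulas that contains an axiomatic base of $(n+1)$-valued Łukasiewicz logic, the axioms $[C](p\odot p)\leftrightarrow[C]p\odot[C]p$, $[C](p\oplus p)\leftrightarrow[C]p\oplus[C]p$, $\neg[C]0$ (all $C\subseteq N$), $([C]p\wedge[C']q)\to[C\cup C'](p\wedge q)$ (for $C\cap C'=\varnothing$), $[\varnothing]p\to\neg[N]\neg p$, $[\mathcal O]1$, $[\mathcal O]p\leftrightarrow[\varnothing]p$, $[\varnothing](p\to q)\to([\varnothing]p\to[\varnothing]q)$, and is closed under Modus Ponens, uniform substitution and Monotonicity for each $[C]$ (from $\phi\to\psi$ infer $[C]\phi\to[C]\psi$). *)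

From mathcomp Require Import all_boot.
Set Implicit Arguments. Unset Strict Implicit. Unset Printing Implicit Defensive.

(* Formulas of L+ over a finite set of players A (= N); Prop = nat. *)
Inductive form (A : finType) : Type :=
  | FOne : form A
  | FVar : nat -> form A
  | FImp : form A -> form A -> form A
  | FNeg : form A -> form A
  | FBox : {set A} -> form A -> form A
  | FObl : form A -> form A.
Arguments FOne {A}.

Section Abbrev.
Variable A : finType.
Definition FZero : form A := FNeg FOne.
Definition FOplus (f g : form A) := FImp (FNeg f) g.
Definition FOdot (f g : form A) := FNeg (FImp f (FNeg g)).
Definition FAnd (f g : form A) := FOdot f (FImp f g).
Definition FIff (f g : form A) := FOdot (FImp f g) (FImp g f).

Fixpoint subst (s : nat -> form A) (f : form A) : form A :=
  match f with
  | FOne => FOne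
  | FVar p => s p
  | FImp f g => FImp (subst s f) (subst s g)
  | FNeg f => FNeg (subst s f)
  | FBox C f => FBox C (subst s f)
  | FObl f => FObl (subst s f)
  end.

Fixpoint propositional (f : form A) : bool :=
  match f with
  | FOne | FVar _ => true
  | FImp f g => propositional f && propositional g
  | FNeg f => propositional f
  | FBox _ _ | FObl _ => false
  end.

(* Łukasiewicz semantics on the (n+1)-element chain {0, 1/n, ..., 1},
   value k/n represented by the natural number k <= n. *)
Fixpoint luk_eval (n : nat) (v : nat -> nat) (f : form A) : nat :=
  match f with
  | FOne => n
  | FVar p => v p
  | FImp f g => minn n (n - luk_eval n v f + luk_eval n v g)
  | FNeg f => n - luk_eval n v f
  | FBox _ _ | FObl _ => 0
  end.

Definition luk_taut (n : nat) (f : form A) : Prop :=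
  propositional f /\
  forall v : nat -> nat, (forall p, v p <= n) -> luk_eval n v f = n.
End Abbrev.
Arguments FZero {A}.

Definition p0 {A : finType} : form A := FVar A 0.
Definition q1 {A : finType} : form A := FVar A 1.

Inductive TP (A : finType) (n : nat) : form A -> Prop :=
  | TP_luk f : luk_taut n f -> TP n f
  | TP_odot C : TP n (FIff (FBox C (FOdot p0 p0)) (FOdot (FBox C p0) (FBox C p0)))
  | TP_oplus C : TP n (FIff (FBox C (FOplus p0 p0)) (FOplus (FBox C p0) (FBox C p0)))
  | TP_nobot C : TP n (FNeg (FBox C FZero))
  | TP_super C C' : C :&: C' = set0 ->
      TP n (FImp (FAnd (FBox C p0) (FBox C' q1)) (FBox (C :|: C') (FAnd p0 q1)))
  | TP_reg : TP n (FImp (FBox set0 p0) (FNeg (FBox setT (FNeg p0))))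
  | TP_obl1 : TP n (FObl FOne)
  | TP_obl : TP n (FIff (FObl p0) (FBox set0 p0))
  | TP_K : TP n (FImp (FBox set0 (FImp p0 q1)) (FImp (FBox set0 p0) (FBox set0 q1)))
  | TP_mp f g : TP n f -> TP n (FImp f g) -> TP n g
  | TP_subst s f : TP n f -> TP n (subst s f)
  | TP_mono C f g : TP n (FImp f g) -> TP n (FImp (FBox C f) (FBox C g)).

From mathcomp Require Import all_boot.
From mathcomp Require Import zify.

(* [O]1 together with [O]1 <-> [∅]1 gives [∅]1; a theorem phi yields 1 -> phi,
   and monotonicity of [∅] turns this into [∅]1 -> [∅]phi. *)

Section Derived.
Variables (A : finType) (n : nat).

Definition subst01 (X Y : form A) : nat -> form A :=
  fun k => match k with 0 => X | 1 => Y | _ => FOne end.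

Lemma TP_odotl (X Y : form A) : TP n (FImp (FOdot X Y) X).
Proof.
have taut : TP n (FImp (FOdot p0 q1) (@p0 A)).
  by apply TP_luk; split => // v vn /=; have := vn 0; have := vn 1; lia.
exact: (TP_subst (subst01 X Y) taut).
Qed.

Lemma TP_weaken (X Y : form A) : TP n (FImp X (FImp Y X)).
Proof.
have taut : TP n (FImp p0 (FImp q1 (@p0 A))).
  by apply TP_luk; split => // v vn /=; have := vn 0; have := vn 1; lia.
exact: (TP_subst (subst01 X Y) taut).
Qed.

Lemma TP_iffLR (X Y : form A) : TP n (FIff X Y) -> TP n X -> TP n Y.
Proof.
move=> XY Xth.
exact: TP_mp Xth (TP_mp XY (TP_odotl (FImp X Y) (FImp Y X))).
Qed.

Lemma TP_box0_one : TP n (FBox set0 (@FOne A)).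
Proof.
exact: TP_iffLR (TP_subst (subst01 FOne FOne) (TP_obl _ _)) (TP_obl1 _ _).
Qed.

End Derived.

Theorem mainTheorem16 (A : finType) (n : nat) (phi : form A) :
  TP n phi -> TP n (FBox set0 phi).
Proof.
move=> phi_th.
have one_phi : TP n (FImp FOne phi).
  exact: TP_mp phi_th (TP_weaken A n phi FOne).
exact: TP_mp (TP_box0_one A n) (TP_mono set0 one_phi).
Qed.
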